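(* For $i\in\mathbb Z_{\ge0}$, $J\in\mathbb Z_{>0}$ and $0\le j\le J$, $$W_J(i,J;i+J-j,j\mid v,\lambda)=f(2\eta)^{J-j}\frac{[2\eta i-\eta\Lambda-v]_j}{[\eta\Lambda-v]_J}\cdot\frac{[v+\lambda-\eta\Lambda+2\eta(i+2J-j-1)]_{J-j}\,[\lambda+2\eta(i+J-\Lambda-1)]_j}{[\lambda+2\eta(J-1)]_J}.$$
   Context: Fix $\eta,\tau\in\mathbb C$, $\operatorname{Im}\tau>0$. $f(z)$ denotes either $\theta(z)=-\sum_{j\in\mathbb Z}\exp\big(\pi\mathbf i\tau(j+\tfrac12)^2+2\pi\mathbf i(j+\tfrac12)(z+\tfrac12)\big)$ or $\sin(\pi z)$. Elliptic Pochhammer: $[a]_k=\prod_{m=0}^{k-1}f(a-2\eta m)$ for $k\ge0$, $[a]_k=\prod_{m=1}^{-k}f(a+2\eta m)^{-1}$ for $k<0$. Unfused weights ($k\ge0$): $W_1(k,0;k,0\mid v,\lambda,\Lambda)=\frac{f(\eta(\Lambda-2k)-v)f(\lambda+2k\eta)}{f(\eta\Lambda-v)f(\lambda)}$, $W_1(k,1;k+1,0\mid\cdot)=\frac{f(v+\lambda+\eta(2k+2-\Lambda))f(2\eta)}{f(\eta\Lambda-v)f(\lambda)}$, $W_1(k,0;k-1,1\mid\cdot)=\frac{f(\lambda-v+\eta(2k-2-\Lambda))f(2\eta(\Lambda+1-k))f(2k\eta)}{f(\eta\Lambda-v)f(\lambda)f(2\eta)}$ ($k\ge1$), $W_1(k,1;k,1\mid\cdot)=\frac{f(\eta(2k-\Lambda)-v)f(\lambda+2\eta(k-\Lambda))}{f(\eta\Lambda-v)f(\lambda)}$,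 and $0$ for all other quadruples. Column weights: for $\mathcal J_1=(j_{1,k})_{k=1}^J,\mathcal J_2=(j_{2,k})_{k=1}^J\in\{0,1\}^J$, $i^{(1)}=i_1$, $i^{(k+1)}=i^{(k)}+j_{1,k}-j_{2,k}$, $\Phi_J=\lambda$, $\Phi_k=\Phi_{k+1}\mp2\eta$ according as $j_{1,k+1}=0$ or $1$; $W_J(i_1,\mathcal J_1;i_2,\mathcal J_2\mid v,\lambda)=\prod_{k=1}^JW_1(i^{(k)},j_{1,k};i^{(k+1)},j_{2,k}\mid v+2\eta(k-1),\Phi_k,\Lambda)$ if all $i^{(k)}\ge0$ and $i^{(J+1)}=i_2$, else $0$. The fused weight is $W_J(i_1,j_1;i_2,j_2\mid v,\lambda)=\sum_{|\mathcal J_1|=j_1}W_J(i_1,\mathcal J_1;i_2,\mathcal K\mid v,\lambda)$ for any $\mathcal K\in\{0,1\}^J$ with $|\mathcal K|=j_2$ (independent of the choice of $\mathcal K$), and $0$ if $j_2\notin\{0,\dots,J\}$; $\Lambda$ is a fixed parameter suppressed from notation. *)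

From Stdlib Require Import Reals Lra Lia ZArith Arith List ClassicalEpsilon.
Import ListNotations.
Open Scope R_scope.

Definition Cplx : Type := (R * R)%type.
Definition Re (z : Cplx) : R := fst z.
Definition Im (z : Cplx) : R := snd z.
Definition Czero : Cplx := (0, 0).
Definition Cone : Cplx := (1, 0).
Definition Ci : Cplx := (0, 1).
Definition RtoC (x : R) : Cplx := (x, 0).
Definition ZtoC (n : Z) : Cplx := (IZR n, 0).
Definition NtoC (n : nat) : Cplx := (INR n, 0).
Definition Cadd (z w : Cplx) : Cplx := (fst z + fst w, snd z + snd w).
Definition Copp (z : Cplx) : Cplx := (- fst z, - snd z).
Definition Csub (z w : Cplx) : Cplx := Cadd z (Copp w).
Definition Cmul (z w : Cplx) : Cplx :=
  (fst z * fst w - snd z * snd w, fst z * snd w + snd z * fst w).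
Definition Cinv (z : Cplx) : Cplx :=
  (fst z / (fst z ^ 2 + snd z ^ 2), - snd z / (fst z ^ 2 + snd z ^ 2)).
Definition Cdiv (z w : Cplx) : Cplx := Cmul z (Cinv w).
Fixpoint Cpow (z : Cplx) (n : nat) : Cplx :=
  match n with O => Cone | S n => Cmul z (Cpow z n) end.
Definition Cexp (z : Cplx) : Cplx := (exp (fst z) * cos (snd z), exp (fst z) * sin (snd z)).

Declare Scope C_scope.
Delimit Scope C_scope with Cplx.
Infix "+" := Cadd : C_scope.
Infix "-" := Csub : C_scope.
Infix "*" := Cmul : C_scope.
Infix "/" := Cdiv : C_scope.
Notation "- z" := (Copp z) : C_scope.
Infix "^" := Cpow : C_scope.

Definition CPI : Cplx := RtoC PI.

Definition Csinpi (z : Cplx) : Cplx :=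
  ((Cexp (Ci * CPI * z) - Cexp (- (Ci * CPI * z))) / (RtoC 2 * Ci))%Cplx.

Definition theta_term (tau z : Cplx) (j : Z) : Cplx :=
  let h := (ZtoC j + RtoC (1/2))%Cplx in
  Cexp (CPI * Ci * tau * h * h + RtoC 2 * CPI * Ci * h * (z + RtoC (1/2)))%Cplx.

Definition theta_partial (tau z : Cplx) (N : nat) : Cplx :=
  fold_right Cadd Czero
    (map (fun m : nat => theta_term tau z (Z.of_nat m - Z.of_nat N)%Z)
         (seq 0 (2 * N + 1))).

Definition theta_sum_is (tau z c : Cplx) : Prop :=
  Un_cv (fun N => Re (theta_partial tau z N)) (Re c) /\
  Un_cv (fun N => Im (theta_partial tau z N)) (Im c).

(* theta(z) = - sum_{j in Z} exp(...)  (the series converges for Im tau > 0) *)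
Definition theta (tau z : Cplx) : Cplx :=
  Copp (epsilon (inhabits Czero) (fun c => theta_sum_is tau z c)).

Inductive fkind : Type := FTheta | FSin.

Definition fsel (fk : fkind) (tau : Cplx) (z : Cplx) : Cplx :=
  match fk with FTheta => theta tau z | FSin => Csinpi z end.

Definition prodC (l : list Cplx) : Cplx := fold_right Cmul Cone l.

Definition poch (f : Cplx -> Cplx) (eta a : Cplx) (k : Z) : Cplx :=
  if (0 <=? k)%Z then
    prodC (map (fun m : nat => f (a - RtoC 2 * eta * NtoC m)%Cplx) (seq 0 (Z.to_nat k)))
  else
    prodC (map (fun m : nat => Cinv (f (a + RtoC 2 * eta * NtoC m)%Cplx))
               (seq 1 (Z.to_nat (- k)))).

(* W1 f eta k a k' b v lam Lam = W_1(k,a;k',b | v, lam, Lam); intended for k >= 0 *)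
Definition W1 (f : Cplx -> Cplx) (eta : Cplx) (k : Z) (a : nat) (k' : Z) (b : nat)
           (v lam Lam : Cplx) : Cplx :=
  let kc := ZtoC k in
  let two := RtoC 2 in
  let D := (f (eta * Lam - v) * f lam)%Cplx in
  if (Nat.eqb a 0 && Nat.eqb b 0 && Z.eqb k' k)%bool then
    (f (eta * (Lam - two * kc) - v) * f (lam + two * kc * eta) / D)%Cplx
  else if (Nat.eqb a 1 && Nat.eqb b 0 && Z.eqb k' (k + 1))%bool then
    (f (v + lam + eta * (two * kc + two - Lam)) * f (two * eta) / D)%Cplx
  else if (Nat.eqb a 0 && Nat.eqb b 1 && Z.eqb k' (k - 1) && Z.leb 1 k)%bool then
    (f (lam - v + eta * (two * kc - two - Lam)) * f (two * eta * (Lam + Cone - kc))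
       * f (two * kc * eta) / (D * f (two * eta)))%Cplx
  else if (Nat.eqb a 1 && Nat.eqb b 1 && Z.eqb k' k)%bool then
    (f (eta * (two * kc - Lam) - v) * f (lam + two * eta * (kc - Lam)) / D)%Cplx
  else Czero.

(* sequences in {0,1}^J are lists of nats of length J; entry k (1-indexed) *)
Definition bit (l : list nat) (k : nat) : nat := nth (k - 1) l 0%nat.

Definition sumZ (l : list Z) : Z := fold_right Z.add 0%Z l.
Definition sumC (l : list Cplx) : Cplx := fold_right Cadd Czero l.

Definition iseq (i1 : Z) (J1 J2 : list nat) (k : nat) : Z :=
  (i1 + sumZ (map (fun m => Z.of_nat (bit J1 m) - Z.of_nat (bit J2 m))%Z
                  (seq 1 (k - 1))))%Z.

(* Phi_J = lam, Phi_k = Phi_{k+1} - 2 eta if j_{1,k+1} = 0, + 2 eta if = 1 *)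
Definition Phi (eta lam : Cplx) (J1 : list nat) (J k : nat) : Cplx :=
  (lam + sumC (map (fun m => if Nat.eqb (bit J1 m) 0 then - (RtoC 2 * eta)
                             else RtoC 2 * eta)
                   (seq (k + 1) (J - k))))%Cplx.

Definition WJ (f : Cplx -> Cplx) (eta Lam : Cplx) (i1 : Z) (J1 : list nat) (i2 : Z)
           (J2 : list nat) (v lam : Cplx) : Cplx :=
  let J := length J1 in
  if (forallb (fun k => Z.leb 0 (iseq i1 J1 J2 k)) (seq 1 (J + 1))
      && Z.eqb (iseq i1 J1 J2 (J + 1)) i2)%bool then
    prodC (map (fun k => W1 f eta (iseq i1 J1 J2 k) (bit J1 k)
                           (iseq i1 J1 J2 (k + 1)) (bit J2 k)
                           (v + RtoC 2 * eta * NtoC (k - 1))%Cplx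
                           (Phi eta lam J1 J k) Lam)
               (seq 1 J))
  else Czero.

Fixpoint all_bits (J : nat) : list (list nat) :=
  match J with
  | O => [ [] ]
  | S J' => map (cons 0%nat) (all_bits J') ++ map (cons 1%nat) (all_bits J')
  end.

(* fused weight W_J(i1, j1; i2, j2 | v, lam), computed with the representative
   K in {0,1}^J of weight j2 = |K| (the paper states the value is independent
   of K; the theorem is stated for every such K). *)
Definition WJfused (f : Cplx -> Cplx) (eta Lam : Cplx) (J : nat) (i1 : Z) (j1 : nat)
           (i2 : Z) (K : list nat) (v lam : Cplx) : Cplx :=
  sumC (map (fun J1 => WJ f eta Lam i1 J1 i2 K v lam)
            (filter (fun J1 => Nat.eqb (list_sum J1) j1) (all_bits J))).

(* Since j1 = J, the only sequence J1 in the fused sum is (1,...,1); along it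
   Phi_k = lam + 2 eta (J - k), and the path i^(k) goes up exactly at the
   zeros of K.  Removing the first bit b of K leaves the same kind of column,
   of length J - 1, started at (i + 1 - b, v + 2 eta).  So an induction on K
   shows that the product of unfused weights is a fixed closed form in
   (i, v, J, |K|): a 1-bit contributes W_1(k,1;k,1), extending the two
   falling Pochhammer products of the numerator, and a 0-bit contributes
   W_1(k,1;k+1,0), extending the rising product and the power of f(2 eta).
   Division is total and [Cinv] is multiplicative. *)
From Stdlib Require Import Reals ZArith List Lia Psatz.
Import ListNotations.
Open Scope R_scope.

Lemma Cring_th : ring_theory Czero Cone Cadd Cmul Csub Copp (@eq Cplx).
Proof.
  constructor; intros; unfold Cadd, Cmul, Csub, Copp, Czero, Cone;
    repeat match goal with x : Cplx |- _ => destruct x end;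
    simpl; try reflexivity; f_equal; ring.
Qed.
Add Ring Cring : Cring_th.

Lemma Cinv_mul z w : Cinv (Cmul z w) = Cmul (Cinv z) (Cinv w).
Proof.
  destruct z as [a b], w as [c d]; unfold Cinv, Cmul; simpl.
  destruct (Req_dec (a ^ 2 + b ^ 2) 0) as [Hz | Hz].
  { assert (a = 0) by nra; assert (b = 0) by nra; subst.
    unfold Rdiv; f_equal; ring. }
  destruct (Req_dec (c ^ 2 + d ^ 2) 0) as [Hw | Hw].
  { assert (c = 0) by nra; assert (d = 0) by nra; subst.
    unfold Rdiv; f_equal; ring. }
  assert (Hzw : (a * c - b * d) ^ 2 + (a * d + b * c) ^ 2 <> 0).
  { replace ((a * c - b * d) ^ 2 + (a * d + b * c) ^ 2)
      with ((a ^ 2 + b ^ 2) * (c ^ 2 + d ^ 2)) by ring.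
    now apply Rmult_integral_contrapositive. }
  f_equal; field; repeat split; simpl in *; rewrite ?Rmult_1_r in *; auto.
Qed.

Lemma Cinv_one : Cinv Cone = Cone.
Proof. unfold Cinv, Cone; simpl; f_equal; field. Qed.

Lemma NtoC_0 : NtoC 0 = Czero.
Proof. reflexivity. Qed.

Lemma NtoC_S n : NtoC (S n) = Cadd (NtoC n) Cone.
Proof. unfold NtoC, Cadd, Cone; rewrite S_INR; simpl; f_equal; ring. Qed.

Lemma NtoC_add a b : NtoC (a + b) = Cadd (NtoC a) (NtoC b).
Proof. unfold NtoC, Cadd; rewrite plus_INR; simpl; f_equal; ring. Qed.

Lemma ZtoC_nat n : ZtoC (Z.of_nat n) = NtoC n.
Proof. unfold ZtoC, NtoC; now rewrite <- INR_IZR_INZ. Qed.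

Ltac NtoC_simpl := repeat rewrite ?NtoC_add, ?NtoC_S, ?NtoC_0.

Open Scope C_scope.

Definition prodf (g : nat -> Cplx) (n : nat) : Cplx := prodC (map g (seq 0 n)).

Lemma prodC_app l1 l2 : prodC (l1 ++ l2) = prodC l1 * prodC l2.
Proof. induction l1 as [|x l1 IH]; simpl; [ring | rewrite IH; ring]. Qed.

Lemma prodf_ext g h n :
  (forall m, (m < n)%nat -> g m = h m) -> prodf g n = prodf h n.
Proof.
  intros Hgh; unfold prodf; f_equal; apply map_ext_in.
  intros m Hm; apply in_seq in Hm; apply Hgh; lia.
Qed.

Lemma prodf_S g n : prodf g (S n) = g 0%nat * prodf (fun m => g (S m)) n.
Proof. unfold prodf; simpl; now rewrite <- seq_shift, map_map. Qed.

Lemma prodf_Sr g n : prodf g (S n) = prodf g n * g n.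
Proof. unfold prodf; rewrite seq_S, map_app, prodC_app; simpl; ring. Qed.

Lemma prodf_rev g n : prodf g n = prodf (fun m => g (n - 1 - m)%nat) n.
Proof.
  revert g; induction n as [|n IH]; intros g; [reflexivity |].
  rewrite prodf_S, (prodf_Sr (fun m => g (S n - 1 - m)%nat)), IH.
  replace (S n - 1 - n)%nat with 0%nat by lia.
  rewrite (prodf_ext _ (fun m => g (S n - 1 - m)%nat)); [ring |].
  intros m Hm; f_equal; lia.
Qed.

Section Pochhammer.

Variables (f : Cplx -> Cplx) (eta : Cplx).

Definition falling_poch (a : Cplx) (k : nat) : Cplx :=
  prodf (fun m => f (a - RtoC 2 * eta * NtoC m)) k.

Definition rising_poch (a : Cplx) (k : nat) : Cplx :=
  prodf (fun m => f (a + RtoC 2 * eta * NtoC m)) k.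

Lemma falling_poch_S a k :
  falling_poch a (S k) = f a * falling_poch (a - RtoC 2 * eta) k.
Proof.
  unfold falling_poch; rewrite prodf_S, NtoC_0.
  replace (a - RtoC 2 * eta * Czero) with a by ring.
  f_equal; apply prodf_ext; intros m _; f_equal; NtoC_simpl; ring.
Qed.

Lemma rising_poch_S a k :
  rising_poch a (S k) = f a * rising_poch (a + RtoC 2 * eta) k.
Proof.
  unfold rising_poch; rewrite prodf_S, NtoC_0.
  replace (a + RtoC 2 * eta * Czero) with a by ring.
  f_equal; apply prodf_ext; intros m _; f_equal; NtoC_simpl; ring.
Qed.

Lemma rising_poch_Sr a k :
  rising_poch a (S k) = rising_poch a k * f (a + RtoC 2 * eta * NtoC k).
Proof. apply prodf_Sr. Qed.

(* Stated with the base point [a + 2 eta p] so that the case [k = 0] needs no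
   care with the truncated subtraction [k - 1]. *)
Lemma rising_poch_falling a p k :
  rising_poch (a + RtoC 2 * eta * NtoC p) k =
  falling_poch (a + RtoC 2 * eta * NtoC (p + k - 1)) k.
Proof.
  unfold rising_poch, falling_poch; rewrite prodf_rev.
  apply prodf_ext; intros m Hm; f_equal.
  replace (p + k - 1)%nat with (p + (k - 1 - m) + m)%nat by lia.
  NtoC_simpl; ring.
Qed.

Lemma poch_of_nat a k : poch f eta a (Z.of_nat k) = falling_poch a k.
Proof.
  unfold poch; replace (0 <=? Z.of_nat k)%Z with true by (symmetry; apply Z.leb_le; lia).
  now rewrite Nat2Z.id.
Qed.

End Pochhammer.

Definition bits01 (K : list nat) : Prop := Forall (fun b => b = 0%nat \/ b = 1%nat) K.

Lemma list_sum_bits01_le K : bits01 K -> (list_sum K <= length K)%nat.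
Proof. induction 1 as [|b K Hb _ IH]; simpl; [lia | destruct Hb; subst; lia]. Qed.

Lemma bit_cons a l k : (1 <= k)%nat -> bit (a :: l) (S k) = bit l k.
Proof. intros Hk; unfold bit; destruct k; [lia | now simpl; rewrite Nat.sub_0_r]. Qed.

Lemma bit_repeat n k : (1 <= k <= n)%nat -> bit (repeat 1%nat n) k = 1%nat.
Proof.
  intros Hk; unfold bit.
  assert (Hi : (k - 1 < n)%nat) by lia; clear Hk; revert Hi; generalize (k - 1)%nat.
  induction n as [|n IH]; intros m Hm; [lia |].
  destruct m as [|m]; [reflexivity | apply IH; lia].
Qed.

Lemma all_bits_sum_le J l : In l (all_bits J) -> (list_sum l <= J)%nat.
Proof.
  revert l; induction J as [|J IH]; intros l Hl; simpl in Hl.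
  - destruct Hl as [<- | []]; simpl; lia.
  - apply in_app_or in Hl.
    destruct Hl as [Hl | Hl]; apply in_map_iff in Hl; destruct Hl as [x [<- Hx]];
      apply IH in Hx; simpl; lia.
Qed.

Lemma filter_all_bits_full J :
  filter (fun l => Nat.eqb (list_sum l) J) (all_bits J) = [repeat 1%nat J].
Proof.
  induction J as [|J IH]; [reflexivity |].
  simpl all_bits; rewrite filter_app, !filter_map_swap.
  replace (filter (fun l => Nat.eqb (list_sum (0%nat :: l)) (S J)) (all_bits J)) with (@nil (list nat)).
  - simpl; change (map (cons 1%nat) (filter (fun l => Nat.eqb (list_sum l) J) (all_bits J))
                    = [repeat 1%nat (S J)]).
    now rewrite IH.
  - rewrite (filter_ext_in _ (fun _ => false)), filter_false; [reflexivity |].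
    intros l Hl; apply all_bits_sum_le in Hl; apply Nat.eqb_neq; simpl; lia.
Qed.

Lemma sumC_map_const (c : Cplx) (l : list nat) :
  sumC (map (fun _ => c) l) = NtoC (length l) * c.
Proof.
  induction l as [|x l IH]; simpl; [rewrite NtoC_0 | rewrite IH, NtoC_S]; ring.
Qed.

Lemma Phi_repeat eta lam n k :
  Phi eta lam (repeat 1%nat n) n k = lam + RtoC 2 * eta * NtoC (n - k).
Proof.
  unfold Phi; rewrite (map_ext_in _ (fun _ => RtoC 2 * eta)).
  - rewrite sumC_map_const, length_seq; ring.
  - intros m Hm; apply in_seq in Hm; now rewrite bit_repeat by lia.
Qed.

Lemma iseq_1 i J1 J2 : iseq i J1 J2 1 = i.
Proof. unfold iseq; simpl; lia. Qed.

Lemma iseq_cons i a b J1 J2 k : (1 <= k)%nat ->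
  iseq i (a :: J1) (b :: J2) (S k) = iseq (i + Z.of_nat a - Z.of_nat b)%Z J1 J2 k.
Proof.
  intros Hk; unfold iseq; destruct k as [|k]; [lia |].
  replace (S (S k) - 1)%nat with (S k) by lia; replace (S k - 1)%nat with k by lia.
  simpl seq; rewrite <- (seq_shift k 1); simpl map; rewrite map_map.
  rewrite (map_ext_in _ (fun m => (Z.of_nat (bit J1 m) - Z.of_nat (bit J2 m))%Z)).
  - unfold bit at 1 2; simpl; lia.
  - intros m Hm; apply in_seq in Hm; now rewrite !bit_cons by lia.
Qed.

Lemma Z_of_nat_succ_sub_bit i b : b = 0%nat \/ b = 1%nat ->
  (Z.of_nat i + Z.of_nat 1 - Z.of_nat b)%Z = Z.of_nat (i + 1 - b).
Proof. intros [-> | ->]; lia. Qed.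

Lemma iseq_repeat_path K : bits01 K -> forall i : nat,
  (forall k, (1 <= k <= length K + 1)%nat ->
     (0 <= iseq (Z.of_nat i) (repeat 1%nat (length K)) K k)%Z) /\
  iseq (Z.of_nat i) (repeat 1%nat (length K)) K (length K + 1) =
  Z.of_nat (i + length K - list_sum K).
Proof.
  induction 1 as [|b K Hb HK IH]; intros i.
  { split; [intros k Hk; simpl in Hk; replace k with 1%nat by lia |];
      rewrite iseq_1; simpl; lia. }
  pose proof (list_sum_bits01_le K HK).
  destruct (IH (i + 1 - b)%nat) as [Hnonneg Hend]; simpl length; simpl repeat; split.
  - intros [|[|k]] Hk; [lia | rewrite iseq_1; lia |].
    rewrite iseq_cons, Z_of_nat_succ_sub_bit by (auto || lia); apply Hnonneg; simpl in Hk; lia.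
  - replace (S (length K) + 1)%nat with (S (length K + 1)) by lia.
    rewrite iseq_cons, Z_of_nat_succ_sub_bit, Hend by (auto || lia).
    simpl list_sum; f_equal; destruct Hb; subst; lia.
Qed.

Section OnesColumn.

Variables (f : Cplx -> Cplx) (eta Lam lam : Cplx).

Definition ones_factor (i : Z) (K : list nat) (v : Cplx) (k : nat) : Cplx :=
  let J1 := repeat 1%nat (length K) in
  W1 f eta (iseq i J1 K k) 1 (iseq i J1 K (k + 1)) (bit K k)
     (v + RtoC 2 * eta * NtoC (k - 1)) (lam + RtoC 2 * eta * NtoC (length K - k)) Lam.

Definition ones_column (i : Z) (K : list nat) (v : Cplx) : Cplx :=
  prodC (map (ones_factor i K v) (seq 1 (length K))).

Definition ones_column_closed (i : nat) (v : Cplx) (n o : nat) : Cplx :=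
  Cpow (f (RtoC 2 * eta)) (n - o)
  * falling_poch f eta (RtoC 2 * eta * NtoC i - eta * Lam - v) o
  * rising_poch f eta (v + lam - eta * Lam + RtoC 2 * eta * NtoC (i + n)) (n - o)
  * falling_poch f eta (lam + RtoC 2 * eta * (NtoC (i + n) - Lam - Cone)) o
  / (falling_poch f eta (eta * Lam - v) n * rising_poch f eta lam n).

Lemma ones_column_cons i b K v :
  ones_column i (b :: K) v =
  W1 f eta i 1 (i + Z.of_nat 1 - Z.of_nat b)%Z b v
     (lam + RtoC 2 * eta * NtoC (length K)) Lam
  * ones_column (i + Z.of_nat 1 - Z.of_nat b)%Z K (v + RtoC 2 * eta).
Proof.
  unfold ones_column at 1; simpl length; simpl seq.
  rewrite <- (seq_shift (length K) 1); cbn [map]; rewrite map_map.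
  unfold ones_column, prodC; cbn [fold_right]; f_equal.
  - unfold ones_factor; simpl repeat.
    rewrite iseq_1, (iseq_cons _ _ _ _ _ 1), iseq_1 by lia.
    simpl length; rewrite Nat.sub_diag, Nat.sub_succ, Nat.sub_0_r, NtoC_0.
    unfold bit; simpl nth; f_equal; ring.
  - f_equal; apply map_ext_in; intros k Hk; apply in_seq in Hk.
    unfold ones_factor; simpl repeat; replace (S k + 1)%nat with (S (k + 1)) by lia.
    rewrite !iseq_cons, bit_cons by lia; f_equal.
    destruct k as [|k]; [lia |]; simpl; rewrite Nat.sub_0_r, NtoC_S; ring.
Qed.

Lemma ones_column_nil i v : ones_column i [] v = ones_column_closed 0 v 0 0.
Proof.
  unfold ones_column, ones_column_closed, falling_poch, rising_poch; simpl.
  unfold prodf; simpl; unfold Cdiv; rewrite Cinv_mul, Cinv_one; ring.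
Qed.

Lemma W1_1_0 k v l :
  W1 f eta k 1 (k + 1)%Z 0 v l Lam =
  f (v + l + eta * (RtoC 2 * ZtoC k + RtoC 2 - Lam)) * f (RtoC 2 * eta)
  / (f (eta * Lam - v) * f l).
Proof. unfold W1; simpl Nat.eqb; now rewrite Z.eqb_refl. Qed.

Lemma W1_1_1 k v l :
  W1 f eta k 1 k 1 v l Lam =
  f (eta * (RtoC 2 * ZtoC k - Lam) - v) * f (l + RtoC 2 * eta * (ZtoC k - Lam))
  / (f (eta * Lam - v) * f l).
Proof. unfold W1; simpl Nat.eqb; now rewrite Z.eqb_refl. Qed.

Lemma ones_column_closed_S0 i v n o : (o <= n)%nat ->
  W1 f eta (Z.of_nat i) 1 (Z.of_nat i + 1)%Z 0 v (lam + RtoC 2 * eta * NtoC n) Lam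
  * ones_column_closed (i + 1) (v + RtoC 2 * eta) n o
  = ones_column_closed i v (S n) o.
Proof.
  intros Hon; rewrite W1_1_0, ZtoC_nat.
  unfold ones_column_closed.
  rewrite Nat.sub_succ_l, rising_poch_S, falling_poch_S, rising_poch_Sr by exact Hon.
  replace (i + 1 + n)%nat with (i + S n)%nat by lia.
  replace (RtoC 2 * eta * NtoC (i + 1) - eta * Lam - (v + RtoC 2 * eta))
    with (RtoC 2 * eta * NtoC i - eta * Lam - v) by (NtoC_simpl; ring).
  replace (v + RtoC 2 * eta + lam - eta * Lam + RtoC 2 * eta * NtoC (i + S n))
    with (v + lam - eta * Lam + RtoC 2 * eta * NtoC (i + S n) + RtoC 2 * eta) by ring.
  replace (v + (lam + RtoC 2 * eta * NtoC n) + eta * (RtoC 2 * NtoC i + RtoC 2 - Lam))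
    with (v + lam - eta * Lam + RtoC 2 * eta * NtoC (i + S n)) by (NtoC_simpl; ring).
  replace (eta * Lam - (v + RtoC 2 * eta)) with (eta * Lam - v - RtoC 2 * eta) by ring.
  simpl Cpow; unfold Cdiv; rewrite !Cinv_mul; ring.
Qed.

Lemma ones_column_closed_S1 i v n o :
  W1 f eta (Z.of_nat i) 1 (Z.of_nat i) 1 v (lam + RtoC 2 * eta * NtoC n) Lam
  * ones_column_closed i (v + RtoC 2 * eta) n o
  = ones_column_closed i v (S n) (S o).
Proof.
  rewrite W1_1_1, ZtoC_nat.
  unfold ones_column_closed; simpl Nat.sub.
  rewrite !falling_poch_S, rising_poch_Sr.
  replace (RtoC 2 * eta * NtoC i - eta * Lam - (v + RtoC 2 * eta))
    with (RtoC 2 * eta * NtoC i - eta * Lam - v - RtoC 2 * eta) by ring.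
  replace (v + RtoC 2 * eta + lam - eta * Lam + RtoC 2 * eta * NtoC (i + n))
    with (v + lam - eta * Lam + RtoC 2 * eta * NtoC (i + S n)) by (NtoC_simpl; ring).
  replace (lam + RtoC 2 * eta * (NtoC (i + n) - Lam - Cone))
    with (lam + RtoC 2 * eta * (NtoC (i + S n) - Lam - Cone) - RtoC 2 * eta)
    by (NtoC_simpl; ring).
  replace (eta * Lam - (v + RtoC 2 * eta)) with (eta * Lam - v - RtoC 2 * eta) by ring.
  replace (eta * (RtoC 2 * NtoC i - Lam) - v)
    with (RtoC 2 * eta * NtoC i - eta * Lam - v) by ring.
  replace (lam + RtoC 2 * eta * NtoC n + RtoC 2 * eta * (NtoC i - Lam))
    with (lam + RtoC 2 * eta * (NtoC (i + S n) - Lam - Cone)) by (NtoC_simpl; ring).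
  unfold Cdiv; rewrite !Cinv_mul; ring.
Qed.

Lemma ones_column_eq K : bits01 K -> forall i v,
  ones_column (Z.of_nat i) K v = ones_column_closed i v (length K) (list_sum K).
Proof.
  induction 1 as [|b K Hb HK IH]; intros i v; [apply ones_column_nil |].
  rewrite ones_column_cons, Z_of_nat_succ_sub_bit, IH by exact Hb; simpl length; simpl list_sum.
  destruct Hb as [-> | ->]; simpl Nat.add.
  - rewrite Nat.sub_0_r, Nat2Z.inj_add.
    now apply ones_column_closed_S0, list_sum_bits01_le.
  - rewrite Nat.add_sub; apply ones_column_closed_S1.
Qed.

Lemma WJfused_full_column K i v : bits01 K ->
  WJfused f eta Lam (length K) (Z.of_nat i) (length K)
    (Z.of_nat (i + length K - list_sum K)) K v lam
  = ones_column (Z.of_nat i) K v.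
Proof.
  intros HK; destruct (iseq_repeat_path K HK i) as [Hnonneg Hend].
  unfold WJfused; rewrite filter_all_bits_full; simpl map; simpl sumC.
  unfold WJ; rewrite repeat_length, Hend, Z.eqb_refl.
  replace (forallb _ (seq 1 (length K + 1))) with true
    by (symmetry; apply forallb_forall; intros k Hk; apply in_seq in Hk;
        apply Z.leb_le, Hnonneg; lia).
  simpl andb.
  rewrite (map_ext_in _ (ones_factor (Z.of_nat i) K v))
    by (intros k Hk; apply in_seq in Hk; unfold ones_factor;
        now rewrite bit_repeat, Phi_repeat by lia).
  change (prodC _) with (ones_column (Z.of_nat i) K v); ring.
Qed.

End OnesColumn.

Close Scope C_scope.

Theorem lemma3p8 (fk : fkind) (eta tau Lam v lam : Cplx) (Htau : 0 < Im tau)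
  (i J j : nat) (HJ : (0 < J)%nat) (Hj : (j <= J)%nat)
  (K : list nat) (HK01 : Forall (fun b => b = 0%nat \/ b = 1%nat) K)
  (HKlen : length K = J) (HKsum : list_sum K = j)
  (* genericity: every denominator occurring on either side is nonzero *)
  (Hnz2 : fsel fk tau (RtoC 2 * eta)%Cplx <> Czero)
  (HnzV : forall m : nat, (m < J)%nat ->
            fsel fk tau (eta * Lam - v - RtoC 2 * eta * NtoC m)%Cplx <> Czero)
  (HnzL : forall m : Z, (Z.abs m < Z.of_nat J)%Z ->
            fsel fk tau (lam + RtoC 2 * eta * ZtoC m)%Cplx <> Czero) :
  let f := fsel fk tau in
  WJfused f eta Lam J (Z.of_nat i) J (Z.of_nat (i + J - j)) K v lam =
  (Cpow (f (RtoC 2 * eta)) (J - j)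
   * poch f eta (RtoC 2 * eta * NtoC i - eta * Lam - v) (Z.of_nat j)
   / poch f eta (eta * Lam - v) (Z.of_nat J)
   * (poch f eta (v + lam - eta * Lam + RtoC 2 * eta * NtoC (i + 2 * J - j - 1))
           (Z.of_nat (J - j))
      * poch f eta (lam + RtoC 2 * eta * (NtoC (i + J) - Lam - Cone)) (Z.of_nat j))
   / poch f eta (lam + RtoC 2 * eta * NtoC (J - 1)) (Z.of_nat J))%Cplx.
Proof.
  intro f; clearbody f; subst J j.
  rewrite WJfused_full_column, ones_column_eq by exact HK01; unfold ones_column_closed.
  replace (rising_poch f eta lam (length K))
    with (rising_poch f eta (lam + RtoC 2 * eta * NtoC 0)%Cplx (length K))
    by (rewrite NtoC_0; f_equal; ring).
  rewrite !poch_of_nat, !rising_poch_falling, Nat.add_0_l.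
  replace (i + length K + (length K - list_sum K) - 1)%nat
    with (i + 2 * length K - list_sum K - 1)%nat
    by (pose proof (list_sum_bits01_le K HK01); lia).
  unfold Cdiv; rewrite Cinv_mul; ring.
Qed.
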